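(* For every $n\ge1$, almost surely, $\mathbf W^{2n,\uparrow}$ and $\mathbf W^{2n,\downarrow}$ each contain a unique bi-infinite path.
   Context: For $n\ge1$, $\mathsf{Cyl}^\uparrow_{2n}=\{(x,t):x\in\mathbb Z/2n\mathbb Z,t\in\mathbb Z,x-t\equiv0\ (\mathrm{mod}\ 2)\}$, $\mathsf{Cyl}^\downarrow_{2n}=\{(x,t):x-t\equiv1\ (\mathrm{mod}\ 2)\}$. Let $(\xi(w))_{w\in\mathsf{Cyl}^\uparrow_{2n}}$ be i.i.d. with $\mathbb P(\xi=1)=\mathbb P(\xi=-1)=1/2$. The cylindric lattice web $\mathbf W^{2n,\uparrow}$ consists of the walks $\mathbf W^{2n,\uparrow}_{(x,t)}(t)=x$, $\mathbf W^{2n,\uparrow}_{(x,t)}(s)=\mathbf W^{2n,\uparrow}_{(x,t)}(s-1)+\xi(\mathbf W^{2n,\uparrow}_{(x,t)}(s-1),s-1)\bmod 2n$ for integers $s>t$, $(x,t)\in\mathsf{Cyl}^\uparrow_{2n}$; equivalently its edge set is $\{(w,w+(\xi(w),1)):w\in\mathsf{Cyl}^\uparrow_{2n}\}$. Its dual $\mathbf W^{2n,\downarrow}$ consists of the walks $\mathbf W^{2n,\downarrow}_{(x,t)}(t)=x$, $\mathbf W^{2n,\downarrow}_{(x,t)}(s)=\mathbf W^{2n,\downarrow}_{(x,t)}(s+1)-\xi(\mathbf W^{2n,\downarrow}_{(x,t)}(s+1),s)\bmod 2n$ for integers $s<t$, $(x,t)\in\mathsf{Cyl}^\downarrow_{2n}$.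 For $D\in\{\uparrow,\downarrow\}$, a bi-infinite path of $\mathsf{Cyl}^D_{2n}$ is a sequence $(x_i,i)_{i\in\mathbb Z}\subset\mathsf{Cyl}^D_{2n}$ with $x_i-x_{i-1}\bmod 2n\in\{1,2n-1\}$ for all $i$; $\mathbf W^{2n,D}$ contains it if all its edges are edges of $\mathbf W^{2n,D}$. *)

From Stdlib Require Import ZArith Reals List.
Open Scope R_scope.

(* A sample is a coin value for every site;
   the measure is the uniform (fair-coin) product measure.  Only the
   sites (x,t) with 0 <= x < 2n and x - t even (i.e. Cyl^up_{2n}, with
   x its representative in {0,..,2n-1}) are used; the remaining coins are
   dummy independent coordinates, which does not affect the law of xi. *)
Definition site := (Z * Z)%type.
Definition Omega := site -> bool.

Definition cyl (L : list site) (v : site -> bool) (w : Omega) : Prop :=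
  forall s, In s L -> w s = v s.

(* N is a null set for the fair-coin product measure: for every eps > 0 it
   is covered by countably many cylinder sets of total measure <= eps
   (a cylinder fixing k distinct coordinates has probability 2^{-k}). *)
Definition null (N : Omega -> Prop) : Prop :=
  forall eps : R, 0 < eps ->
    exists (L : nat -> list site) (v : nat -> site -> bool),
      (forall k, NoDup (L k)) /\
      (forall w, N w -> exists k, cyl (L k) (v k) w) /\
      (forall K, sum_f_R0 (fun k => (/ 2) ^ length (L k)) K <= eps).

Definition almost_surely (E : Omega -> Prop) : Prop :=
  null (fun w => ~ E w).

Open Scope Z_scope.

Definition xi (n : Z) (w : Omega) (x t : Z) : Z :=
  if w (x mod (2 * n), t) then 1 else -1.

(* Bi-infinite path of Cyl^D_{2n}: positions in {0,..,2n-1} (representatives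
   of Z/2nZ), parity d (0 for up, 1 for down) for x_i - i, and
   x_i - x_{i-1} mod 2n in {1, 2n-1}. *)
Definition biinf_path (n : Z) (d : Z) (p : Z -> Z) : Prop :=
  forall i : Z,
    0 <= p i < 2 * n /\
    (p i - i) mod 2 = d /\
    ((p i - p (i - 1)) mod (2 * n) = 1 \/
     (p i - p (i - 1)) mod (2 * n) = 2 * n - 1).

Definition path_up (n : Z) (p : Z -> Z) : Prop := biinf_path n 0 p.
Definition path_down (n : Z) (p : Z -> Z) : Prop := biinf_path n 1 p.

(* Edges of W^{2n,up}: (w, w + (xi(w),1)) for w in Cyl^up.
   The path edge between (p(i-1),i-1) and (p i,i) is such an edge. *)
Definition in_web_up (n : Z) (w : Omega) (p : Z -> Z) : Prop :=
  forall i : Z, p i = (p (i - 1) + xi n w (p (i - 1)) (i - 1)) mod (2 * n).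

(* Edges of the dual W^{2n,down}: ((y,s+1),(y - xi(y,s), s)) for
   (y,s+1) in Cyl^down.  The path edge between (p i,i) and (p(i-1),i-1)
   is such an edge. *)
Definition in_web_down (n : Z) (w : Omega) (p : Z -> Z) : Prop :=
  forall i : Z, p (i - 1) = (p i - xi n w (p i) (i - 1)) mod (2 * n).

Definition unique_path_up (n : Z) (w : Omega) : Prop :=
  (exists p, path_up n p /\ in_web_up n w p) /\
  (forall p q, path_up n p -> in_web_up n w p ->
               path_up n q -> in_web_up n w q -> forall i, p i = q i).

Definition unique_path_down (n : Z) (w : Omega) : Prop :=
  (exists p, path_down n p /\ in_web_down n w p) /\
  (forall p q, path_down n p -> in_web_down n w p ->
               path_down n q -> in_web_down n w q -> forall i, p i = q i).

From Stdlib Require Import ZArith Reals List Lia Lra FinFun Classical IndefiniteDescription.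
Import ListNotations.

(* Call the 2n x 2n space-time window [0, 2n) x [s, s + 2n) a trap when its
   coins are -1 at x = 0 and +1 elsewhere.  Inside a trap every forward walk
   climbs into {0, 2n-1} and every dual walk descends into {0, 1}, and the
   parity of x - t then leaves a single position: all walks through a trap
   coalesce.  Disjoint windows are traps independently with probability
   2^(-4n^2), so almost surely traps occur arbitrarily far in the past and in
   the future.  Traps in the past make all forward walks started before them
   agree, which defines the bi-infinite path of the web and forces uniqueness;
   traps in the future do the same for the dual web.  The null set is bounded
   by explicit cylinder covers: M consecutive non-trap windows cost
   (1 - 2^(-4n^2))^M. *)

(** * Cylinder covers *)

Open Scope R_scope.

Definition cylinder := (list site * (site -> bool))%type.

Definition in_cyl (c : cylinder) (w : Omega) : Prop := cyl (fst c) (snd c) w.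

Definition cyl_mass (c : cylinder) : R := (/ 2) ^ length (fst c).

Fixpoint mass (cs : list cylinder) : R :=
  match cs with [] => 0 | c :: cs' => cyl_mass c + mass cs' end.

Lemma cyl_mass_pos c : 0 < cyl_mass c.
Proof. apply pow_lt; lra. Qed.

Lemma mass_nonneg cs : 0 <= mass cs.
Proof. induction cs as [|c cs IH]; simpl; [lra|]. pose proof (cyl_mass_pos c); lra. Qed.

Lemma mass_app cs cs' : mass (cs ++ cs') = mass cs + mass cs'.
Proof. induction cs; simpl; lra. Qed.

Lemma sum_mass_nth_le cs K d : (K < length cs)%nat ->
  sum_f_R0 (fun k => cyl_mass (nth k cs d)) K <= mass cs.
Proof.
  revert K; induction cs as [|c cs IH]; intros K HK; simpl in HK; [lia|].
  destruct K as [|K].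
  - simpl. pose proof (mass_nonneg cs); lra.
  - rewrite decomp_sum by lia. specialize (IH K ltac:(lia)). simpl in *. lra.
Qed.

Lemma null_mono (N N' : Omega -> Prop) :
  (forall w, N' w -> N w) -> null N -> null N'.
Proof.
  intros sub HN eps Heps. destruct (HN eps Heps) as (L & v & nodup & cover & small).
  exists L, v. split; [exact nodup | split; [|exact small]]. auto.
Qed.

Section CountableUnion.

Variable C : nat -> list cylinder.
Hypothesis C_nonempty : forall J, C J <> [].

Definition concat_upto (K : nat) : list cylinder := flat_map C (seq 0 (S K)).

Lemma concat_upto_S K : concat_upto (S K) = concat_upto K ++ C (S K).
Proof.
  unfold concat_upto. rewrite seq_S, flat_map_app. simpl. now rewrite app_nil_r.
Qed.

Lemma concat_upto_length K : (K < length (concat_upto K))%nat.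
Proof.
  induction K as [|K IH].
  - unfold concat_upto. simpl. rewrite app_nil_r.
    destruct (C 0%nat) eqn:E; [contradiction (C_nonempty 0) | simpl; lia].
  - rewrite concat_upto_S, length_app.
    destruct (C (S K)) eqn:E; [contradiction (C_nonempty (S K)) | simpl; lia].
Qed.

Lemma concat_upto_prefix K K' : (K <= K')%nat -> exists r, concat_upto K' = concat_upto K ++ r.
Proof.
  induction 1 as [|K' _ [r Hr]]; [exists []; now rewrite app_nil_r|].
  exists (r ++ C (S K')). now rewrite concat_upto_S, Hr, app_assoc.
Qed.

Lemma nth_concat_upto K K' k d : (k < length (concat_upto K))%nat -> (K <= K')%nat ->
  nth k (concat_upto K') d = nth k (concat_upto K) d.
Proof.
  intros Hk HK. destruct (concat_upto_prefix K K' HK) as [r ->]. now apply app_nth1.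
Qed.

Lemma nth_concat_upto_self K K' k d : (k <= K)%nat -> (K <= K')%nat ->
  nth k (concat_upto K') d = nth k (concat_upto K) d.
Proof. intros. apply nth_concat_upto; [pose proof (concat_upto_length K); lia | auto]. Qed.

Lemma mass_concat_upto K : mass (concat_upto K) = sum_f_R0 (fun J => mass (C J)) K.
Proof.
  induction K as [|K IH].
  - unfold concat_upto. simpl. now rewrite app_nil_r.
  - now rewrite concat_upto_S, mass_app, IH.
Qed.

(* Countable subadditivity, phrased with the explicit covers of [null]: the
   k-th covering cylinder is the k-th entry of the concatenation of the [C J]. *)
Lemma null_cover_of_union (E : Omega -> Prop) (eps : R) :
  (forall J c, In c (C J) -> NoDup (fst c)) ->
  (forall w, E w -> exists J c, In c (C J) /\ in_cyl c w) ->
  (forall K, sum_f_R0 (fun J => mass (C J)) K <= eps) ->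
  exists (L : nat -> list site) (v : nat -> site -> bool),
    (forall k, NoDup (L k)) /\
    (forall w, E w -> exists k, cyl (L k) (v k) w) /\
    (forall K, sum_f_R0 (fun k => (/ 2) ^ length (L k)) K <= eps).
Proof.
  intros nodup cover small.
  set (d := ([], fun _ => true) : cylinder).
  set (c_ k := nth k (concat_upto k) d).
  assert (c_in : forall k, In (c_ k) (concat_upto k)).
  { intros k. apply nth_In, concat_upto_length. }
  exists (fun k => fst (c_ k)), (fun k => snd (c_ k)). split; [|split].
  - intros k. destruct (proj1 (in_flat_map _ _ _) (c_in k)) as (J & _ & HJ).
    exact (nodup J _ HJ).
  - intros w Ew. destruct (cover w Ew) as (J & c & Hc & Hw).
    assert (Hc' : In c (concat_upto J)).
    { apply in_flat_map. exists J. split; [apply in_seq; lia | exact Hc]. }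
    destruct (In_nth _ _ d Hc') as (k & Hk & Hck). exists k.
    unfold c_.
    rewrite <- (nth_concat_upto_self k (Nat.max J k) k d), (nth_concat_upto J), Hck by lia.
    exact Hw.
  - intros K. rewrite (sum_eq _ (fun k => cyl_mass (nth k (concat_upto K) d))).
    + specialize (small K). rewrite <- mass_concat_upto in small.
      eapply Rle_trans; [apply sum_mass_nth_le, concat_upto_length | exact small].
    + intros k Hk. unfold cyl_mass, c_. now rewrite (nth_concat_upto_self k K) by lia.
Qed.

End CountableUnion.

Definition site_eq_dec (a b : site) : {a = b} + {a <> b}.
Proof. decide equality; apply Z.eq_dec. Defined.

(* The k-th cylinder fixes the first k coins of [l] to agree with [v] and the
   next one to disagree. *)
Fixpoint compl_cover (v : site -> bool) (l : list site) : list cylinder :=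
  match l with
  | [] => []
  | s :: l' => ([s], fun _ => negb (v s)) ::
      map (fun c => (s :: fst c, fun x => if site_eq_dec x s then v s else snd c x))
        (compl_cover v l')
  end.

Lemma mass_map_cons s f cs :
  mass (map (fun c => (s :: fst c, f c)) cs) = / 2 * mass cs.
Proof. induction cs as [|c cs IH]; simpl; [lra|]. rewrite IH. unfold cyl_mass. simpl. lra. Qed.

Lemma mass_compl_cover v l : mass (compl_cover v l) = 1 - (/ 2) ^ length l.
Proof.
  induction l as [|s l IH]; simpl; [lra|]. rewrite mass_map_cons, IH. unfold cyl_mass. simpl. lra.
Qed.

Lemma compl_cover_nonempty v l : l <> [] -> compl_cover v l <> [].
Proof. destruct l; simpl; congruence. Qed.

Lemma compl_cover_support v l : NoDup l ->
  forall c, In c (compl_cover v l) -> NoDup (fst c) /\ incl (fst c) l.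
Proof.
  induction l as [|s l IH]; simpl; intros Hl c Hc; [contradiction|].
  inversion Hl as [|? ? s_notin Hl']; subst.
  destruct Hc as [<-|Hc].
  - split; [repeat constructor; intros []|]. intros x [<-|[]]; now left.
  - apply in_map_iff in Hc as (c' & <- & Hc'). destruct (IH Hl' c' Hc') as [nodup sub].
    split; simpl.
    + constructor; [intros Hs; exact (s_notin (sub _ Hs)) | exact nodup].
    + intros x [<-|Hx]; [now left | right; auto].
Qed.

Lemma compl_cover_covers v l w : (exists s, In s l /\ w s <> v s) ->
  exists c, In c (compl_cover v l) /\ in_cyl c w.
Proof.
  induction l as [|s l IH]; intros (s0 & Hs0 & Hw); simpl in Hs0; [contradiction|].
  destruct (Bool.bool_dec (w s) (v s)) as [agree|disagree].
  - destruct Hs0 as [<-|Hs0]; [contradiction|].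
    destruct IH as (c & Hc & Hcw); [now exists s0|].
    exists (s :: fst c, fun x => if site_eq_dec x s then v s else snd c x). split.
    + right. apply in_map_iff. now exists c.
    + intros x Hx. simpl. destruct (site_eq_dec x s) as [->|Hxs]; [exact agree|].
      destruct Hx as [->|Hx]; [congruence | exact (Hcw x Hx)].
  - exists ([s], fun _ => negb (v s)). split; [now left|].
    intros x [<-|[]]. simpl. destruct (w s), (v s); simpl in *; congruence.
Qed.

(* On disjoint supports this is the intersection of the two cylinders. *)
Definition cyl_merge (c1 c2 : cylinder) : cylinder :=
  (fst c1 ++ fst c2,
   fun x => if in_dec site_eq_dec x (fst c1) then snd c1 x else snd c2 x).

Definition cover_prod (C1 C2 : list cylinder) : list cylinder :=
  flat_map (fun c1 => map (cyl_merge c1) C2) C1.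

Lemma mass_cover_prod C1 C2 : mass (cover_prod C1 C2) = mass C1 * mass C2.
Proof.
  assert (merge_mass : forall c, mass (map (cyl_merge c) C2) = cyl_mass c * mass C2).
  { intros c. induction C2 as [|c2 C2 IH]; simpl; [lra|].
    rewrite IH. unfold cyl_mass, cyl_merge. simpl. rewrite length_app, pow_add. lra. }
  induction C1 as [|c1 C1 IH]; simpl; [lra|].
  unfold cover_prod in *. simpl. rewrite mass_app, merge_mass, IH. lra.
Qed.

Lemma cover_prod_nonempty C1 C2 : C1 <> [] -> C2 <> [] -> cover_prod C1 C2 <> [].
Proof. destruct C1, C2; simpl; congruence. Qed.

Lemma In_cover_prod c C1 C2 : In c (cover_prod C1 C2) ->
  exists c1 c2, In c1 C1 /\ In c2 C2 /\ c = cyl_merge c1 c2.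
Proof.
  intros Hc. apply in_flat_map in Hc as (c1 & H1 & Hc).
  apply in_map_iff in Hc as (c2 & <- & H2). now exists c1, c2.
Qed.

Lemma cover_prod_covers C1 C2 w :
  (exists c, In c C1 /\ in_cyl c w) -> (exists c, In c C2 /\ in_cyl c w) ->
  exists c, In c (cover_prod C1 C2) /\ in_cyl c w.
Proof.
  intros (c1 & H1 & K1) (c2 & H2 & K2). exists (cyl_merge c1 c2). split.
  - apply in_flat_map. exists c1. split; [exact H1 | now apply in_map].
  - intros x Hx. simpl. destruct (in_dec site_eq_dec x (fst c1)) as [Hx1|Hx1]; [now apply K1|].
    apply in_app_or in Hx as [Hx|Hx]; [contradiction | now apply K2].
Qed.

(** * Traps *)

Open Scope Z_scope.

Lemma NoDup_list_prod (A B : Type) (l : list A) (l' : list B) :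
  NoDup l -> NoDup l' -> NoDup (list_prod l l').
Proof.
  intros Hl Hl'. induction Hl as [|a l a_notin Hl IH]; simpl; [constructor|].
  apply NoDup_app; [apply Injective_map_NoDup; [intros ? ? [=]; auto | exact Hl'] | exact IH |].
  intros [x y] H1 H2. apply in_map_iff in H1 as (? & [= <- _] & _).
  now apply in_prod_iff in H2.
Qed.

Definition Zrange (a : Z) (m : nat) : list Z := map (fun k => a + Z.of_nat k) (seq 0 m).

Lemma In_Zrange x a m : In x (Zrange a m) <-> a <= x < a + Z.of_nat m.
Proof.
  unfold Zrange. rewrite in_map_iff. split.
  - intros (k & <- & Hk). apply in_seq in Hk. lia.
  - intros Hx. exists (Z.to_nat (x - a)). split; [lia | apply in_seq; lia].
Qed.

Lemma NoDup_Zrange a m : NoDup (Zrange a m).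
Proof. apply Injective_map_NoDup, seq_NoDup. intros k k' E. lia. Qed.

Lemma length_Zrange a m : length (Zrange a m) = m.
Proof. unfold Zrange. now rewrite length_map, length_seq. Qed.

Section Traps.

Variable n : Z.
Hypothesis n_pos : 1 <= n.

Definition window (s : Z) : list site :=
  list_prod (Zrange 0 (Z.to_nat (2 * n))) (Zrange s (Z.to_nat (2 * n))).

Lemma In_window x t s : In (x, t) (window s) <-> 0 <= x < 2 * n /\ s <= t < s + 2 * n.
Proof. unfold window. rewrite in_prod_iff, !In_Zrange. lia. Qed.

Lemma NoDup_window s : NoDup (window s).
Proof. apply NoDup_list_prod; apply NoDup_Zrange. Qed.

Lemma length_window s : length (window s) = (Z.to_nat (2 * n) * Z.to_nat (2 * n))%nat.
Proof. unfold window, site. now rewrite length_prod, !length_Zrange. Qed.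

(* [true] encodes the coin +1. *)
Definition trap_coin (st : site) : bool := negb (fst st =? 0).

Definition trap (w : Omega) (s : Z) : Prop :=
  forall st, In st (window s) -> w st = trap_coin st.

Definition trap_prob : R := ((/ 2) ^ (Z.to_nat (2 * n) * Z.to_nat (2 * n)))%R.

Lemma trap_prob_bounds : (0 < trap_prob <= / 2)%R.
Proof.
  unfold trap_prob. destruct (Z.to_nat (2 * n) * Z.to_nat (2 * n))%nat as [|m] eqn:E; [nia|].
  assert (0 < (/ 2) ^ m <= 1)%R.
  { clear E. induction m; simpl; lra. }
  simpl. lra.
Qed.

Fixpoint no_trap_cover (a : Z) (M : nat) : list cylinder :=
  match M with
  | O => [([], fun _ => true)]
  | S M' => cover_prod (compl_cover trap_coin (window a)) (no_trap_cover (a + 2 * n) M')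
  end.

Lemma no_trap_cover_support M : forall a c, In c (no_trap_cover a M) ->
  NoDup (fst c) /\ forall st, In st (fst c) -> a <= snd st.
Proof.
  induction M as [|M IH]; intros a c Hc; cbn [no_trap_cover] in Hc.
  - destruct Hc as [<-|[]]. split; [constructor | intros _ []].
  - apply In_cover_prod in Hc as (c1 & c2 & H1 & H2 & ->).
    destruct (compl_cover_support _ _ (NoDup_window a) c1 H1) as [nodup1 sub1].
    destruct (IH _ c2 H2) as [nodup2 late2]. cbn [fst cyl_merge]. split.
    + apply NoDup_app; [exact nodup1 | exact nodup2|].
      intros [x t] Hx Hy. apply sub1, In_window in Hx. apply late2 in Hy. cbn [snd] in *. lia.
    + intros [x t] Hst. apply in_app_or in Hst as [Hst|Hst].
      * apply sub1, In_window in Hst. cbn [snd] in *. lia.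
      * apply late2 in Hst. cbn [snd] in *. lia.
Qed.

Lemma no_trap_cover_covers w M : forall a,
  (forall k, (k < M)%nat -> ~ trap w (a + 2 * n * Z.of_nat k)) ->
  exists c, In c (no_trap_cover a M) /\ in_cyl c w.
Proof.
  induction M as [|M IH]; intros a no_trap; cbn [no_trap_cover].
  - exists ([], fun _ => true). split; [now left | intros ? []].
  - apply cover_prod_covers.
    + apply compl_cover_covers. specialize (no_trap 0%nat ltac:(lia)).
      replace (a + 2 * n * Z.of_nat 0) with a in no_trap by lia.
      apply not_all_ex_not in no_trap as [st Hst]. exists st. now apply imply_to_and.
    + apply IH. intros k Hk. specialize (no_trap (S k) ltac:(lia)).
      now replace (a + 2 * n * Z.of_nat (S k))
        with (a + 2 * n + 2 * n * Z.of_nat k) in no_trap by lia.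
Qed.

Lemma mass_no_trap_cover M : forall a, mass (no_trap_cover a M) = ((1 - trap_prob) ^ M)%R.
Proof.
  induction M as [|M IH]; intros a; simpl.
  - unfold cyl_mass. simpl. lra.
  - now rewrite mass_cover_prod, mass_compl_cover, IH, length_window.
Qed.

Lemma no_trap_cover_nonempty M : forall a, no_trap_cover a M <> [].
Proof.
  induction M as [|M IH]; intros a; simpl; [congruence|].
  apply cover_prod_nonempty; [|apply IH]. apply compl_cover_nonempty.
  intros E. apply (f_equal (@length _)) in E. rewrite length_window in E. cbn [length] in E. nia.
Qed.

End Traps.

(** * Walks in the web and its dual *)

Lemma Z_ind_up (t : Z) (P : Z -> Prop) :
  P t -> (forall j, t <= j -> P j -> P (j + 1)) -> forall j, t <= j -> P j.
Proof.
  intros H0 HS. apply Z.le_ind; [intros ? ? ->; reflexivity | exact H0 |].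
  intros j Hj. rewrite <- Z.add_1_r. auto.
Qed.

Lemma Z_ind_down (t : Z) (P : Z -> Prop) :
  P t -> (forall j, j <= t -> P j -> P (j - 1)) -> forall j, j <= t -> P j.
Proof.
  intros H0 HS j Hj. rewrite <- (Z.opp_involutive j).
  apply (Z_ind_up (- t) (fun k => P (- k))); [now rewrite Z.opp_involutive | | lia].
  intros k Hk Pk. replace (- (k + 1)) with (- k - 1) by lia. apply HS; [lia | exact Pk].
Qed.

Section Walks.

Variables (n : Z) (w : Omega).
Hypothesis n_pos : 1 <= n.

Definition step_up (t x : Z) : Z := (x + xi n w x t) mod (2 * n).
Definition step_down (t y : Z) : Z := (y - xi n w y t) mod (2 * n).

Lemma xi_sign x t : xi n w x t = 1 \/ xi n w x t = -1.
Proof. unfold xi. destruct (w _); auto. Qed.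

Lemma xi_trap s x t : trap n w s -> 0 <= x < 2 * n -> s <= t < s + 2 * n ->
  xi n w x t = if x =? 0 then -1 else 1.
Proof.
  intros Hs Hx Ht. unfold xi. rewrite Z.mod_small by lia.
  rewrite (Hs (x, t)) by (apply In_window; lia). unfold trap_coin. simpl.
  now destruct (x =? 0).
Qed.

(* Inside a trap a forward walk climbs to 2n-1 and then alternates between
   2n-1 and 0; a dual walk descends to 0 and then alternates between 0 and 1. *)
Lemma step_up_trap s x t : trap n w s -> 0 <= x < 2 * n -> s <= t < s + 2 * n ->
  step_up t x = if x =? 0 then 2 * n - 1 else if x =? 2 * n - 1 then 0 else x + 1.
Proof.
  intros Hs Hx Ht. unfold step_up. rewrite (xi_trap s) by auto.
  destruct (Z.eqb_spec x 0); [|destruct (Z.eqb_spec x (2 * n - 1))].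
  - symmetry. apply (Z.mod_unique _ _ (-1)); lia.
  - symmetry. apply (Z.mod_unique _ _ 1); lia.
  - symmetry. apply (Z.mod_unique _ _ 0); lia.
Qed.

Lemma step_down_trap s y t : trap n w s -> 0 <= y < 2 * n -> s <= t < s + 2 * n ->
  step_down t y = if y =? 0 then 1 else y - 1.
Proof.
  intros Hs Hy Ht. unfold step_down. rewrite (xi_trap s) by auto.
  symmetry. apply (Z.mod_unique _ _ 0); destruct (Z.eqb_spec y 0); lia.
Qed.

Lemma step_up_range t x : 0 <= step_up t x < 2 * n.
Proof. apply Z.mod_pos_bound. lia. Qed.

Lemma step_down_range t y : 0 <= step_down t y < 2 * n.
Proof. apply Z.mod_pos_bound. lia. Qed.

Lemma mod_2n_parity a b : (a mod (2 * n) - b) mod 2 = (a - b) mod 2.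
Proof.
  rewrite <- Zminus_mod_idemp_l, Z.mod_mod_divide, Zminus_mod_idemp_l; [reflexivity|].
  exists n; lia.
Qed.

Lemma step_up_parity t x : (step_up t x - (t + 1)) mod 2 = (x - t) mod 2.
Proof.
  unfold step_up. rewrite mod_2n_parity.
  destruct (xi_sign x t) as [-> | ->]; Z.div_mod_to_equations; lia.
Qed.

Lemma step_down_parity t y : (step_down (t - 1) y - (t - 1)) mod 2 = (y - t) mod 2.
Proof.
  unfold step_down. rewrite mod_2n_parity.
  destruct (xi_sign y (t - 1)) as [-> | ->]; Z.div_mod_to_equations; lia.
Qed.

Lemma sign_mod_2n e : e = 1 \/ e = -1 -> e mod (2 * n) = 1 \/ e mod (2 * n) = 2 * n - 1.
Proof.
  intros [-> | ->]; [left | right]; symmetry.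
  - apply (Z.mod_unique _ _ 0); lia.
  - apply (Z.mod_unique _ _ (-1)); lia.
Qed.

Lemma step_up_increment t x :
  (step_up t x - x) mod (2 * n) = 1 \/ (step_up t x - x) mod (2 * n) = 2 * n - 1.
Proof.
  unfold step_up. rewrite Zminus_mod_idemp_l, Z.add_simpl_l. apply sign_mod_2n, xi_sign.
Qed.

Lemma step_down_increment t y :
  (y - step_down t y) mod (2 * n) = 1 \/ (y - step_down t y) mod (2 * n) = 2 * n - 1.
Proof.
  unfold step_down. rewrite Zminus_mod_idemp_r, Z.sub_sub_distr, Z.sub_diag, Z.add_0_l.
  apply sign_mod_2n, xi_sign.
Qed.

(* Parity 0 (resp. 1) of [g j - j] places the walk in Cyl^up (resp. Cyl^down). *)
Definition walk_up (a : Z) (g : Z -> Z) : Prop :=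
  (forall j, a < j -> g j = step_up (j - 1) (g (j - 1))) /\
  (forall j, a <= j -> 0 <= g j < 2 * n /\ (g j - j) mod 2 = 0).

Definition walk_down (a : Z) (g : Z -> Z) : Prop :=
  (forall j, j <= a -> g (j - 1) = step_down (j - 1) (g j)) /\
  (forall j, j <= a -> 0 <= g j < 2 * n /\ (g j - j) mod 2 = 1).

Lemma walk_up_intro a g :
  (forall j, a < j -> g j = step_up (j - 1) (g (j - 1))) ->
  0 <= g a < 2 * n -> (g a - a) mod 2 = 0 -> walk_up a g.
Proof.
  intros Hstep Hrange Hpar. split; [exact Hstep|].
  apply Z_ind_up; [auto|]. intros j Hj [_ IH]. rewrite Hstep by lia.
  replace (j + 1 - 1) with j by lia. split; [apply step_up_range|].
  now rewrite step_up_parity.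
Qed.

Lemma walk_down_intro a g :
  (forall j, j <= a -> g (j - 1) = step_down (j - 1) (g j)) ->
  0 <= g a < 2 * n -> (g a - a) mod 2 = 1 -> walk_down a g.
Proof.
  intros Hstep Hrange Hpar. split; [exact Hstep|].
  apply Z_ind_down; [auto|]. intros j Hj [_ IH]. rewrite Hstep by lia.
  split; [apply step_down_range|]. now rewrite step_down_parity.
Qed.

Lemma walk_up_climbs s a g : trap n w s -> a <= s -> walk_up a g ->
  forall j, s <= j <= s + 2 * n - 2 ->
  g j = 0 \/ g j = 2 * n - 1 \/ j - s + 1 <= g j.
Proof.
  intros Hs Ha [Hstep Hrange] j [Hj Hj'].
  revert Hj'. pattern j. apply (Z_ind_up s); [|intros k Hk IH Hk'|exact Hj].
  - intros _. pose proof (Hrange s ltac:(lia)). lia.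
  - rewrite Hstep by lia. replace (k + 1 - 1) with k by lia.
    pose proof (Hrange k ltac:(lia)) as [Hgk _].
    rewrite (step_up_trap s) by (auto; lia).
    destruct (Z.eqb_spec (g k) 0); [lia|].
    destruct (Z.eqb_spec (g k) (2 * n - 1)); lia.
Qed.

Lemma walk_down_descends s a g : trap n w s -> s + 2 * n <= a -> walk_down a g ->
  forall j, s + 2 <= j <= s + 2 * n ->
  g j = 0 \/ g j = 1 \/ g j <= j - s - 1.
Proof.
  intros Hs Ha [Hstep Hrange] j [Hj Hj'].
  revert Hj. pattern j. apply (Z_ind_down (s + 2 * n)); [|intros k Hk IH Hk'|exact Hj'].
  - intros _. pose proof (Hrange (s + 2 * n) ltac:(lia)). lia.
  - rewrite Hstep by lia. pose proof (Hrange k ltac:(lia)) as [Hgk _].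
    rewrite (step_down_trap s) by (auto; lia).
    destruct (Z.eqb_spec (g k) 0); lia.
Qed.

Lemma walk_up_agree a1 a2 g1 g2 t : walk_up a1 g1 -> walk_up a2 g2 ->
  a1 <= t -> a2 <= t -> g1 t = g2 t -> forall j, t <= j -> g1 j = g2 j.
Proof.
  intros [Hstep1 _] [Hstep2 _] H1 H2 Ht. apply Z_ind_up; [exact Ht|].
  intros j Hj IH. rewrite Hstep1, Hstep2 by lia.
  now replace (j + 1 - 1) with j by lia; rewrite IH.
Qed.

Lemma walk_down_agree a1 a2 g1 g2 t : walk_down a1 g1 -> walk_down a2 g2 ->
  t <= a1 -> t <= a2 -> g1 t = g2 t -> forall j, j <= t -> g1 j = g2 j.
Proof.
  intros [Hstep1 _] [Hstep2 _] H1 H2 Ht. apply Z_ind_down; [exact Ht|].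
  intros j Hj IH. rewrite Hstep1, Hstep2 by lia. now rewrite IH.
Qed.

(* Coalescence: after a trap all forward walks sit in {0, 2n-1} and all dual
   walks before it in {0, 1}; the parity constraint then leaves one choice. *)
Lemma walk_up_coalesce s a1 a2 g1 g2 : trap n w s -> a1 <= s -> a2 <= s ->
  walk_up a1 g1 -> walk_up a2 g2 -> forall j, s + 2 * n - 2 <= j -> g1 j = g2 j.
Proof.
  intros Hs H1 H2 W1 W2. apply (walk_up_agree a1 a2); auto; try lia.
  pose proof (walk_up_climbs s a1 g1 Hs H1 W1 (s + 2 * n - 2) ltac:(lia)).
  pose proof (walk_up_climbs s a2 g2 Hs H2 W2 (s + 2 * n - 2) ltac:(lia)).
  pose proof (proj2 W1 (s + 2 * n - 2) ltac:(lia)).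
  pose proof (proj2 W2 (s + 2 * n - 2) ltac:(lia)).
  Z.div_mod_to_equations. lia.
Qed.

Lemma walk_down_coalesce s a1 a2 g1 g2 : trap n w s -> s + 2 * n <= a1 -> s + 2 * n <= a2 ->
  walk_down a1 g1 -> walk_down a2 g2 -> forall j, j <= s + 2 -> g1 j = g2 j.
Proof.
  intros Hs H1 H2 W1 W2. apply (walk_down_agree a1 a2); auto; try lia.
  pose proof (walk_down_descends s a1 g1 Hs H1 W1 (s + 2) ltac:(lia)).
  pose proof (walk_down_descends s a2 g2 Hs H2 W2 (s + 2) ltac:(lia)).
  pose proof (proj2 W1 (s + 2) ltac:(lia)).
  pose proof (proj2 W2 (s + 2) ltac:(lia)).
  Z.div_mod_to_equations. lia.
Qed.

Fixpoint iter_up (s x : Z) (k : nat) : Z :=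
  match k with O => x | S k' => step_up (s + Z.of_nat k') (iter_up s x k') end.

Fixpoint iter_down (s y : Z) (k : nat) : Z :=
  match k with O => y | S k' => step_down (s - Z.of_nat k' - 1) (iter_down s y k') end.

Definition walk_up_from (s x j : Z) : Z := iter_up s x (Z.to_nat (j - s)).
Definition walk_down_from (s y j : Z) : Z := iter_down s y (Z.to_nat (s - j)).

Lemma walk_up_from_walk s : walk_up s (walk_up_from s (s mod 2)).
Proof.
  apply walk_up_intro.
  - intros j Hj. unfold walk_up_from.
    replace (Z.to_nat (j - s)) with (S (Z.to_nat (j - 1 - s))) by lia. simpl.
    now replace (s + Z.of_nat (Z.to_nat (j - 1 - s))) with (j - 1) by lia.
  - unfold walk_up_from. rewrite Z.sub_diag. cbn [iter_up Z.to_nat].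
    pose proof (Z.mod_pos_bound s 2 ltac:(lia)). lia.
  - unfold walk_up_from. rewrite Z.sub_diag. cbn [iter_up Z.to_nat].
    Z.div_mod_to_equations. lia.
Qed.

Lemma walk_down_from_walk s : walk_down s (walk_down_from s ((s + 1) mod 2)).
Proof.
  apply walk_down_intro.
  - intros j Hj. unfold walk_down_from.
    replace (Z.to_nat (s - (j - 1))) with (S (Z.to_nat (s - j))) by lia. simpl.
    now replace (s - Z.of_nat (Z.to_nat (s - j)) - 1) with (j - 1) by lia.
  - unfold walk_down_from. rewrite Z.sub_diag. cbn [iter_down Z.to_nat].
    pose proof (Z.mod_pos_bound (s + 1) 2 ltac:(lia)). lia.
  - unfold walk_down_from. rewrite Z.sub_diag. cbn [iter_down Z.to_nat].
    Z.div_mod_to_equations. lia.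
Qed.

End Walks.

(** * Bi-infinite paths *)

Section Paths.

Variables (n : Z) (w : Omega).
Hypothesis n_pos : 1 <= n.

Lemma walk_up_of_path p a : path_up n p -> in_web_up n w p -> walk_up n w a p.
Proof.
  intros Hp Hw. split; intros j _; [apply Hw | now destruct (Hp j) as (? & ? & _)].
Qed.

Lemma walk_down_of_path p a : path_down n p -> in_web_down n w p -> walk_down n w a p.
Proof.
  intros Hp Hw. split; intros j _; [apply Hw | now destruct (Hp j) as (? & ? & _)].
Qed.

Lemma path_up_intro p : in_web_up n w p ->
  (forall i, 0 <= p i < 2 * n /\ (p i - i) mod 2 = 0) -> path_up n p.
Proof.
  intros Hw Hp i. destruct (Hp i) as [R P]. split; [exact R | split; [exact P|]].
  rewrite (Hw i). apply (step_up_increment n w n_pos).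
Qed.

Lemma path_down_intro p : in_web_down n w p ->
  (forall i, 0 <= p i < 2 * n /\ (p i - i) mod 2 = 1) -> path_down n p.
Proof.
  intros Hw Hp i. destruct (Hp i) as [R P]. split; [exact R | split; [exact P|]].
  rewrite (Hw i). apply (step_down_increment n w n_pos).
Qed.

(* The bi-infinite path at time [i] is read off any forward walk started at a
   trap lying before time [i]; coalescence makes this choice irrelevant. *)
Lemma path_up_of_past_traps :
  (forall T, exists s, s + 2 * n <= T /\ trap n w s) ->
  exists p, path_up n p /\ in_web_up n w p.
Proof.
  intros traps. destruct (functional_choice _ traps) as [sel Hsel].
  set (g T := walk_up_from n w (sel T) (sel T mod 2)).
  assert (Wg : forall T, walk_up n w (sel T) (g T)) by (intros; now apply walk_up_from_walk).
  assert (agree : forall T T' j, T - 2 <= j -> T' - 2 <= j -> g T j = g T' j).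
  { intros T T' j HT HT'. destruct (Hsel T), (Hsel T').
    destruct (Z.le_ge_cases (sel T) (sel T')).
    - apply (walk_up_coalesce n w n_pos (sel T') (sel T) (sel T')); auto; lia.
    - apply (walk_up_coalesce n w n_pos (sel T) (sel T) (sel T')); auto; lia. }
  assert (web : in_web_up n w (fun i => g i i)).
  { intros i. destruct (Hsel i). rewrite (proj1 (Wg i) i) by lia.
    unfold step_up. now rewrite (agree i (i - 1) (i - 1)) by lia. }
  exists (fun i => g i i). split; [|exact web].
  apply path_up_intro; [exact web|]. intros i. destruct (Hsel i).
  apply (proj2 (Wg i)). lia.
Qed.

Lemma path_down_of_future_traps :
  (forall T, exists s, T <= s /\ trap n w s) ->
  exists p, path_down n p /\ in_web_down n w p.
Proof.
  intros traps. destruct (functional_choice _ traps) as [sel Hsel].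
  set (g T := walk_down_from n w (sel T + 2 * n) ((sel T + 2 * n + 1) mod 2)).
  assert (Wg : forall T, walk_down n w (sel T + 2 * n) (g T))
    by (intros; now apply walk_down_from_walk).
  assert (agree : forall T T' j, j <= T + 2 -> j <= T' + 2 -> g T j = g T' j).
  { intros T T' j HT HT'. destruct (Hsel T), (Hsel T').
    destruct (Z.le_ge_cases (sel T) (sel T')).
    - apply (walk_down_coalesce n w n_pos (sel T) (sel T + 2 * n) (sel T' + 2 * n));
        auto; lia.
    - apply (walk_down_coalesce n w n_pos (sel T') (sel T + 2 * n) (sel T' + 2 * n));
        auto; lia. }
  assert (web : in_web_down n w (fun i => g i i)).
  { intros i. destruct (Hsel (i - 1)). rewrite (proj1 (Wg (i - 1)) i) by lia.
    unfold step_down. now rewrite (agree (i - 1) i i) by lia. }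
  exists (fun i => g i i). split; [|exact web].
  apply path_down_intro; [exact web|]. intros i. destruct (Hsel i).
  apply (proj2 (Wg i)). lia.
Qed.

Lemma path_up_unique_of_past_traps :
  (forall T, exists s, s + 2 * n <= T /\ trap n w s) ->
  forall p q, path_up n p -> in_web_up n w p -> path_up n q -> in_web_up n w q ->
  forall i, p i = q i.
Proof.
  intros traps p q Pp Wp Pq Wq i. destruct (traps i) as (s & Hs & Ts).
  apply (walk_up_coalesce n w n_pos s s s); try apply walk_up_of_path; auto; lia.
Qed.

Lemma path_down_unique_of_future_traps :
  (forall T, exists s, T <= s /\ trap n w s) ->
  forall p q, path_down n p -> in_web_down n w p -> path_down n q -> in_web_down n w q ->
  forall i, p i = q i.
Proof.
  intros traps p q Pp Wp Pq Wq i. destruct (traps i) as (s & Hs & Ts).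
  apply (walk_down_coalesce n w n_pos s (s + 2 * n) (s + 2 * n));
    try apply walk_down_of_path; auto; lia.
Qed.

End Paths.

Definition traps_recurrent (n : Z) (w : Omega) : Prop :=
  forall T, (exists s, s + 2 * n <= T /\ trap n w s) /\ (exists s, T <= s /\ trap n w s).

Lemma unique_paths_of_traps n w : 1 <= n -> traps_recurrent n w ->
  unique_path_up n w /\ unique_path_down n w.
Proof.
  intros n_pos traps.
  assert (past : forall T, exists s, s + 2 * n <= T /\ trap n w s) by apply traps.
  assert (future : forall T, exists s, T <= s /\ trap n w s) by apply traps.
  split; split.
  - now apply path_up_of_past_traps.
  - now apply path_up_unique_of_past_traps.
  - now apply path_down_of_future_traps.
  - now apply path_down_unique_of_future_traps.
Qed.

(** * Traps recur almost surely *)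

Open Scope R_scope.

Lemma sum_geometric_le (r : R) (K : nat) : 0 <= r <= / 2 ->
  sum_f_R0 (fun J => 2 * r ^ S J) K <= 4 * r.
Proof.
  intros Hr.
  enough (H : sum_f_R0 (fun J => 2 * r ^ S J) K <= 4 * r - 4 * r ^ S (S K))
    by (pose proof (pow_le r (S (S K)) (proj1 Hr)); lra).
  induction K as [|K IH].
  - simpl. nra.
  - rewrite tech5. set (x := r ^ S (S K)) in *.
    assert (0 <= x) by (apply pow_le; lra).
    replace (r ^ S (S (S K))) with (r * x) by reflexivity. nra.
Qed.

Lemma traps_recurrent_almost_surely (n : Z) : (1 <= n)%Z -> almost_surely (traps_recurrent n).
Proof.
  intros n_pos eps Heps.
  pose proof (trap_prob_bounds n n_pos) as Hq.
  set (q := trap_prob n) in Hq.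
  destruct (pow_lt_1_zero (1 - q) ltac:(rewrite Rabs_pos_eq; lra)
              (Rmin (eps / 4) (/ 2)) ltac:(apply Rmin_pos; lra)) as [M HM].
  specialize (HM M (le_n M)). rewrite Rabs_pos_eq in HM by (apply pow_le; lra).
  pose proof (Rmin_l (eps / 4) (/ 2)). pose proof (Rmin_r (eps / 4) (/ 2)).
  set (rho := (1 - q) ^ M) in HM.
  assert (rho_pos : 0 <= rho) by (apply pow_le; lra).
  (* [C J] covers the failure of recurrence at some time T with |T| = J: the
     [M (J + 1)] windows right after time 2nJ, or right before -2nJ, are not traps. *)
  set (MJ J := (M * S J)%nat).
  set (C J := no_trap_cover n (2 * n * Z.of_nat J) (MJ J)
           ++ no_trap_cover n (- (2 * n) * (Z.of_nat J + Z.of_nat (MJ J))) (MJ J)).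
  apply (null_cover_of_union C).
  - intros J. pose proof (no_trap_cover_nonempty n n_pos (MJ J) (2 * n * Z.of_nat J)).
    unfold C. destruct (no_trap_cover n _ (MJ J)); simpl; congruence.
  - intros J c Hc. apply in_app_or in Hc as [Hc|Hc]; now apply no_trap_cover_support in Hc.
  - intros w not_rec. apply not_all_ex_not in not_rec as [T HT].
    set (J := Z.to_nat (Z.abs T)). exists J. apply not_and_or in HT as [HT|HT].
    + destruct (no_trap_cover_covers n w (MJ J) (- (2 * n) * (Z.of_nat J + Z.of_nat (MJ J))))
        as (c & Hc & Hcw).
      { intros k Hk Tk. apply HT. eexists; split; [|exact Tk]. nia. }
      exists c. split; [apply in_or_app; now right | exact Hcw].
    + destruct (no_trap_cover_covers n w (MJ J) (2 * n * Z.of_nat J)) as (c & Hc & Hcw).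
      { intros k Hk Tk. apply HT. eexists; split; [|exact Tk]. nia. }
      exists c. split; [apply in_or_app; now left | exact Hcw].
  - intros K. apply (Rle_trans _ (sum_f_R0 (fun J => 2 * rho ^ S J) K)).
    + apply Req_le, sum_eq. intros J _. unfold C, MJ.
      rewrite mass_app, !mass_no_trap_cover, pow_mult. fold q rho. lra.
    + pose proof (sum_geometric_le rho K ltac:(lra)). lra.
Qed.

Theorem proposition3p2 : forall n : Z, (1 <= n)%Z ->
  almost_surely (fun w => unique_path_up n w /\ unique_path_down n w).
Proof.
  intros n n_pos. apply (null_mono (fun w => ~ traps_recurrent n w)).
  - intros w not_unique rec. now apply not_unique, unique_paths_of_traps.
  - now apply traps_recurrent_almost_surely.
Qed.
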